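(* Under Assumption 1 and the partition setting of the context, the optimal value of the convex relaxation (R) equals the optimal value of the convex relaxation (R'): $\min\ \sum_{h\in H}d_h^*w_h+\sum_{h\in H}\sum_{j\in N_h}(D_{jj}-d_h^* )x_j^2+2\sum_{h\in H}\sum_{j\in N_h}c_jx_j$ subject to $\sum_{h\in H}\xi^{ih}w_h+2\sum_{h\in H}\sum_{j\in N_h}a_{ij}x_j\le b_i$ ($i\in M$) and $\sum_{j\in N_h}x_j^2\le w_h$ ($h\in H$), over ${\bf x}\in\mathbb{R}^n$, ${\bf w}\in\mathbb{R}^{H}$. Consequently the optimal value of (R') also equals that of the Shor relaxation (S).
   Context: Let $N=\{1,\dots,n\}$ and $M=\{1,\dots,m\}$. Let ${\bf D}$ and ${\bf A}^i$ ($i\in M$) be real diagonal $n\times n$ matrices, ${\bf c},{\bf a}_i\in\mathbb{R}^n$ ($a_{ij}$ denotes the $j$-th entry of ${\bf a}_i$) and $b_i\in\mathbb{R}$. The diagonal QCQP is (P): $c^\star=\inf\{{\bf x}^\top{\bf D}{\bf x}+2{\bf c}^\top{\bf x} : {\bf x}^\top{\bf A}^i{\bf x}+2{\bf a}_i^\top{\bf x}\le b_i,\ i\in M\}$. Its Shor relaxation is (S): $v^\star=\inf\{{\bf D}\bullet{\bf X}+2{\bf c}^\top{\bf x} : {\bf A}^i\bullet{\bf X}+2{\bf a}_i^\top{\bf x}\le b_i\ (i\in M),\ {\bf X}-{\bf x}{\bf x}^\top\succeq {\bf O}\}$, where ${\bf P}\bullet{\bf Q}=\mathrm{trace}({\bf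 P}{\bf Q})$. The convex relaxation is (R): $p^\star=\inf\{\sum_{j\in N}D_{jj}z_j+2\sum_{j\in N}c_jx_j : \sum_{j\in N}A^i_{jj}z_j+2\sum_{j\in N}a_{ij}x_j\le b_i\ (i\in M),\ x_j^2\le z_j\ (j\in N)\}$. Assumption 1: (i) the feasible region of (P) is nonempty; (ii) there exists $\bar{\bf y}\ge 0$ with $\sum_{i\in M}\bar y_i{\bf A}^i\succ{\bf O}$; (iii) the feasible region of (S) has nonempty interior. Partition setting: $\{N_h\}_{h\in H}$ is a partition of $N$ such that for each $h\in H$ and $i\in M$ there is a number $\xi^{ih}$ with $A^i_{jj}=\xi^{ih}$ for all $j\in N_h$. For each $h\in H$, $d_h^*=\min_{j\in N_h}D_{jj}$ and it is assumed that this minimum is attained at a unique index $j_h\in N_h$. *)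

From HB Require Import structures.
From mathcomp Require Import all_boot all_order all_algebra.
From mathcomp Require Import all_classical all_reals ereal.
Set Implicit Arguments. Unset Strict Implicit. Unset Printing Implicit Defensive.
Import Order.TTheory GRing.Theory Num.Theory.
Local Open Scope ring_scope.

Section QCQP.
Variables (R : realType) (n m k : nat).

Definition psd (M : 'M[R]_n) : Prop :=
  M^T = M /\ forall v : 'rV[R]_n, 0 <= (v *m M *m v^T) 0 0.
Definition pd (M : 'M[R]_n) : Prop :=
  M^T = M /\ forall v : 'rV[R]_n, v != 0 -> 0 < (v *m M *m v^T) 0 0.

Definition dmx (d : 'I_n -> R) : 'M[R]_n := diag_mx (\row_j d j).
Definition outer (x : 'I_n -> R) : 'M[R]_n := \matrix_(i, j) (x i * x j).
Definition qform (d x : 'I_n -> R) : R := \sum_j d j * x j ^+ 2.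
Definition lin (c x : 'I_n -> R) : R := \sum_j c j * x j.

Variables (D : 'I_n -> R) (A : 'I_m -> 'I_n -> R) (c : 'I_n -> R)
  (a : 'I_m -> 'I_n -> R) (b : 'I_m -> R).

Definition P_feas (x : 'I_n -> R) : Prop :=
  forall i, qform (A i) x + 2 * lin (a i) x <= b i.
Definition P_val : \bar R :=
  ereal_inf [set y | exists x, P_feas x /\ y = (qform D x + 2 * lin c x)%:E].

(* (S): Shor relaxation; P • Q = trace (P Q) *)
Definition S_feas (x : 'I_n -> R) (X : 'M[R]_n) : Prop :=
  (forall i, \tr (dmx (A i) *m X) + 2 * lin (a i) x <= b i) /\ psd (X - outer x).
Definition S_val : \bar R :=
  ereal_inf [set y | exists x X, S_feas x X /\
                     y = (\tr (dmx D *m X) + 2 * lin c x)%:E].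
(* the feasible region of (S) has nonempty interior, in the space
   R^n x (symmetric n x n matrices) *)
Definition S_nonempty_interior : Prop :=
  exists x X (e : R), 0 < e /\ S_feas x X /\
    forall (x' : 'I_n -> R) (X' : 'M[R]_n), X'^T = X' ->
      (forall j, `|x' j - x j| < e) -> (forall i j, `|X' i j - X i j| < e) ->
      S_feas x' X'.

Definition R_feas (x z : 'I_n -> R) : Prop :=
  (forall i, lin (A i) z + 2 * lin (a i) x <= b i) /\ (forall j, x j ^+ 2 <= z j).
Definition R_val : \bar R :=
  ereal_inf [set y | exists x z, R_feas x z /\ y = (lin D z + 2 * lin c x)%:E].

(* (R'): blocks N_h = [set j | blk j == h], h : 'I_k *)
Variables (blk : 'I_n -> 'I_k) (xi : 'I_m -> 'I_k -> R) (dstar : 'I_k -> R).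

Definition R'_feas (x : 'I_n -> R) (w : 'I_k -> R) : Prop :=
  (forall i, \sum_h xi i h * w h
             + 2 * \sum_h \sum_(j | blk j == h) a i j * x j <= b i) /\
  (forall h, \sum_(j | blk j == h) x j ^+ 2 <= w h).
Definition R'_obj (x : 'I_n -> R) (w : 'I_k -> R) : R :=
  \sum_h dstar h * w h
  + \sum_h \sum_(j | blk j == h) (D j - dstar h) * x j ^+ 2
  + 2 * \sum_h \sum_(j | blk j == h) c j * x j.
Definition R'_val : \bar R :=
  ereal_inf [set y | exists x w, R'_feas x w /\ y = (R'_obj x w)%:E].

End QCQP.

From HB Require Import structures.
From mathcomp Require Import all_boot all_order all_algebra.
From mathcomp Require Import all_classical all_reals ereal.
From mathcomp Require Import ring.
Import Order.TTheory GRing.Theory Num.Theory.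
Local Open Scope ring_scope.

(* All three values are infima, so each inequality is proved by mapping every
   feasible point of one problem to a feasible point of the other with no
   larger objective (ereal_inf_le_dominated).
   - (S) = (R) holds for ANY diagonal data: (x, X) |-> (x, diag X) and
     (x, z) |-> (x, x x^T + Diag(z - x^2)) preserve feasibility and value,
     since for diagonal matrices only the diagonal of X matters.
   - (R') <= (R): aggregate w_h := sum_{j in N_h} z_j; this only needs
     d_h <= D_jj on N_h.
   - (R) <= (R'): put z_j := x_j^2 except at one representative index j_h of
     each block, which absorbs the slack w_h - sum_{N_h} x_j^2; the values
     agree exactly when d_h = D at the representative. *)

Lemma ereal_inf_le_dominated (R : realType) (S1 S2 : set (\bar R)) :
  (forall y, S1 y -> exists2 y', S2 y' & (y' <= y)%E) ->
  (ereal_inf S2 <= ereal_inf S1)%E.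
Proof.
move=> dom; apply: le_ereal_inf_tmp => y /dom [y' S2y' le_y'y].
by apply: ge_ereal_inf; exists y'.
Qed.

Section DiagonalMatrices.
Variables (R : realType) (n : nat).

Lemma tr_dmx_mul (d : 'I_n -> R) (X : 'M[R]_n) :
  \tr (dmx d *m X) = lin d (fun j => X j j).
Proof.
rewrite /dmx mul_diag_mx /lin /mxtrace; apply: eq_bigr => j _.
by rewrite !mxE.
Qed.

Lemma psd_diag_ge0 (M : 'M[R]_n) (j : 'I_n) : psd M -> 0 <= M j j.
Proof.
move=> [_ M_psd]; have := M_psd (delta_mx 0 j).
by rewrite -rowE trmx_delta -colE !mxE.
Qed.

Lemma psd_dmx (e : 'I_n -> R) : (forall j, 0 <= e j) -> psd (dmx e).
Proof.
move=> e_ge0; split; first by rewrite /dmx tr_diag_mx.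
move=> v; rewrite /dmx mul_mx_diag mxE; apply: sumr_ge0 => j _.
rewrite !mxE -mulrA mulrC -mulrA; apply: mulr_ge0 => //.
by rewrite -expr2 sqr_ge0.
Qed.

End DiagonalMatrices.

Section ShorEqualsR.
Variables (R : realType) (n m : nat) (D : 'I_n -> R) (A : 'I_m -> 'I_n -> R)
  (c : 'I_n -> R) (a : 'I_m -> 'I_n -> R) (b : 'I_m -> R).

Lemma R_feas_lift {x z : 'I_n -> R} : R_feas A a b x z ->
  exists X, S_feas A a b x X /\ (fun j => X j j) = z.
Proof.
move=> [lin_ok sq_le].
exists (outer x + dmx (fun j => z j - x j ^+ 2)).
have diagE : (fun j => (outer x + dmx (fun j => z j - x j ^+ 2)) j j) = z.
  by apply: funext => j; rewrite !mxE eqxx mulr1n expr2 addrC subrK.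
split=> //; split; first by move=> i; rewrite tr_dmx_mul diagE.
rewrite addrAC subrr add0r; apply: psd_dmx => j; by rewrite subr_ge0.
Qed.

Lemma S_feas_project {x : 'I_n -> R} {X : 'M[R]_n} : S_feas A a b x X ->
  R_feas A a b x (fun j => X j j).
Proof.
move=> [lin_ok X_psd]; split; first by move=> i; rewrite -tr_dmx_mul.
move=> j; have := @psd_diag_ge0 _ _ _ j X_psd.
by rewrite !mxE subr_ge0 expr2.
Qed.

Lemma S_eq_R : S_val D A c a b = R_val D A c a b.
Proof.
apply/eqP; rewrite eq_le; apply/andP; split; apply: ereal_inf_le_dominated.
- move=> _ [x [z [xz_feas ->]]].
  have [X [xX_feas diagE]] := R_feas_lift xz_feas.
  by exists (lin D z + 2 * lin c x)%:E => //; exists x, X; rewrite tr_dmx_mul diagE.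
- move=> _ [x [X [xX_feas ->]]].
  exists (lin D (fun j => X j j) + 2 * lin c x)%:E; last by rewrite tr_dmx_mul.
  by exists x, (fun j => X j j); split=> //; apply: S_feas_project.
Qed.

End ShorEqualsR.

Section BlockAggregation.
Variables (R : realType) (n m k : nat) (D : 'I_n -> R) (A : 'I_m -> 'I_n -> R)
  (c : 'I_n -> R) (a : 'I_m -> 'I_n -> R) (b : 'I_m -> R)
  (blk : 'I_n -> 'I_k) (xi : 'I_m -> 'I_k -> R).

Hypothesis A_blockwise : forall i j, A i j = xi i (blk j).

Definition blocksum (f : 'I_n -> R) (h : 'I_k) : R := \sum_(j | blk j == h) f j.

Lemma sum_by_blocks (f : 'I_n -> R) : \sum_j f j = \sum_h blocksum f h.
Proof. by rewrite (partition_big blk xpredT). Qed.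

Lemma lin_A_blocks (i : 'I_m) (z : 'I_n -> R) :
  lin (A i) z = \sum_h xi i h * blocksum z h.
Proof.
rewrite /lin sum_by_blocks; apply: eq_bigr => h _.
by rewrite /blocksum mulr_sumr; apply: eq_bigr => j /eqP <-; rewrite A_blockwise.
Qed.

Lemma R'_le_R (d : 'I_k -> R) :
  (forall j, d (blk j) <= D j) -> (R'_val D c a b blk xi d <= R_val D A c a b)%E.
Proof.
move=> d_le; apply: ereal_inf_le_dominated => _ [x [z [[lin_ok sq_le] ->]]].
exists (R'_obj D c blk d x (blocksum z))%:E.
  exists x, (blocksum z); split=> //; split.
  - by move=> i; have := lin_ok i; rewrite lin_A_blocks /lin sum_by_blocks.
  - by move=> h; apply: ler_sum => j _; apply: sq_le.
rewrite lee_fin /R'_obj /lin [\sum_j c j * x j]sum_by_blocks lerD2r.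
rewrite sum_by_blocks -big_split /=; apply: ler_sum => h _.
rewrite /blocksum mulr_sumr -big_split /=; apply: ler_sum => j /eqP <-.
rewrite -subr_ge0.
have -> : D j * z j - (d (blk j) * z j + (D j - d (blk j)) * x j ^+ 2)
   = (D j - d (blk j)) * (z j - x j ^+ 2) by ring.
by apply: mulr_ge0; rewrite subr_ge0.
Qed.

Variable rep : 'I_k -> 'I_n.
Hypothesis rep_in_block : forall h, blk (rep h) = h.

Definition disaggregate (x : 'I_n -> R) (w : 'I_k -> R) (j : 'I_n) : R :=
  x j ^+ 2 + (if j == rep (blk j)
              then w (blk j) - blocksum (fun l => x l ^+ 2) (blk j) else 0).

Lemma blocksum_disaggregate (g x : 'I_n -> R) (w : 'I_k -> R) (h : 'I_k) :
  blocksum (fun j => g j * disaggregate x w j) h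
  = blocksum (fun j => g j * x j ^+ 2) h
    + g (rep h) * (w h - blocksum (fun l => x l ^+ 2) h).
Proof.
rewrite /blocksum /disaggregate; under eq_bigr => j _ do rewrite mulrDr.
rewrite big_split /=; congr (_ + _).
rewrite (bigD1 (rep h)) /=; last by rewrite rep_in_block.
rewrite big1 ?addr0; first by rewrite rep_in_block eqxx.
by move=> j /andP [/eqP <- ne]; rewrite (negbTE ne) mulr0.
Qed.

Lemma R_le_R' : (R_val D A c a b <= R'_val D c a b blk xi (fun h => D (rep h)))%E.
Proof.
apply: ereal_inf_le_dominated => _ [x [w [[lin_ok sq_le] ->]]].
set z := disaggregate x w.
have lin_lifted i : lin (A i) z = \sum_h xi i h * w h.
  rewrite lin_A_blocks; apply: eq_bigr => h _; congr (_ * _).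
  have := blocksum_disaggregate (fun _ => 1) x w h.
  rewrite /blocksum mul1r; under eq_bigr => j _ do rewrite mul1r.
  by under [X in _ = X + _]eq_bigr => j _ do rewrite mul1r; rewrite addrC subrK.
exists (lin D z + 2 * lin c x)%:E.
  exists x, z; split=> //; split.
  - by move=> i; rewrite lin_lifted /lin sum_by_blocks; apply: lin_ok.
  - move=> j; rewrite /z /disaggregate lerDl.
    by case: ifP => // _; rewrite subr_ge0; apply: sq_le.
rewrite lee_fin /R'_obj [lin c x]/lin sum_by_blocks lerD2r /lin sum_by_blocks.
under eq_bigr => h _ do rewrite blocksum_disaggregate.
rewrite -big_split /= le_eqVlt; apply/orP; left; apply/eqP.
apply: eq_bigr => h _; rewrite /blocksum mulrBr mulr_sumr.
under [X in _ = _ + X]eq_bigr => j _ do rewrite mulrBl.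
by rewrite sumrB; ring.
Qed.

End BlockAggregation.

Theorem proposition2 (R : realType) (n m k : nat)
  (D : 'I_n -> R) (A : 'I_m -> 'I_n -> R) (c : 'I_n -> R)
  (a : 'I_m -> 'I_n -> R) (b : 'I_m -> R)
  (blk : 'I_n -> 'I_k) (xi : 'I_m -> 'I_k -> R) (jh : 'I_k -> 'I_n) :
  (* Assumption 1 *)
  (exists x, P_feas A a b x) ->
  (exists y : 'I_m -> R, (forall i, 0 <= y i) /\ pd (\sum_i y i *: dmx (A i))) ->
  S_nonempty_interior A a b ->
  (* partition setting: blocks N_h = {j | blk j = h} are nonempty *)
  (forall h, exists j, blk j = h) ->
  (forall i j, A i j = xi i (blk j)) ->
  (* d_h^* = min_{j in N_h} D_jj attained at the unique index jh h *)
  (forall h, blk (jh h) = h) ->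
  (forall h j, blk j = h -> j != jh h -> D (jh h) < D j) ->
  R_val D A c a b = R'_val D c a b blk xi (fun h => D (jh h)) /\
  R'_val D c a b blk xi (fun h => D (jh h)) = S_val D A c a b.
Proof.
move=> _ _ _ _ A_blockwise jh_in_block jh_min.
have dstar_le j : D (jh (blk j)) <= D j.
  have [j_rep|ne] := eqVneq j (jh (blk j)); first by rewrite {2}j_rep.
  exact: ltW (jh_min (blk j) j erefl ne).
have R_eq_R' : R_val D A c a b = R'_val D c a b blk xi (fun h => D (jh h)).
  apply/eqP; rewrite eq_le R_le_R' ?R'_le_R //.
split; first exact: R_eq_R'.
by rewrite -R_eq_R' S_eq_R.
Qed.
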